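(* Let $(M,w)$ be an oriented Poisson manifold, $g$ a Riemannian metric on $M$, $dV_g=\sqrt{\det g}\,dx^1\wedge\cdots\wedge dx^n$, and $\Phi=(\det g)\,dx^1\wedge\cdots\wedge dx^n\wedge dy^1\wedge\cdots\wedge dy^n$, a volume form on $TM$. Then the modular vector field of $(TM,w^C,\Phi)$ is $$\Delta^{TM}_\Phi=2\,(\Delta^M_{dV_g})^V,$$ where $\Delta^M_{dV_g}=\sum_k\left(\frac{\partial w^{ik}}{\partial x^k}+w^{ik}\frac{\partial\ln\sqrt{\det g}}{\partial x^k}\right)\frac{\partial}{\partial x^i}$ is the modular vector field of $(M,w,dV_g)$.
   Context: Coordinates $(x^i)$ on $M$, induced coordinates $(x^i,y^i)$ on $TM$. $w=\frac12w^{ij}\partial_{x^i}\wedge\partial_{x^j}$ and its complete lift $w^C=w^{ij}\partial_{x^i}\wedge\partial_{y^j}+\frac12y^k\frac{\partial w^{ij}}{\partial x^k}\partial_{y^i}\wedge\partial_{y^j}$. For a Poisson manifold $(N,\Pi)$ with volume form $\mu$, the Hamiltonian vector field is $X_f=\{f,\cdot\}_\Pi$ (on $M$: $X_f=\frac{\partial f}{\partial x^i}w^{ij}\partial_{x^j}$), the divergence is defined by $\mathcal L_X\mu=(\mathrm{div}_\mu X)\mu$, and the modular vector field $\Delta_\mu$ is the vector field $f\mapsto\mathrm{div}_\mu X_f$. The vertical lift of $X=X^i\partial_{x^i}$ is $X^V=X^i\partial_{y^i}$. *)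

From HB Require Import structures.
From mathcomp Require Import all_boot all_order all_algebra.
From mathcomp Require Import all_classical all_reals all_analysis.
Set Implicit Arguments. Unset Strict Implicit. Unset Printing Implicit Defensive.
Import Order.TTheory GRing.Theory Num.Theory.
Import numFieldNormedType.Exports.
Local Open Scope classical_set_scope.
Local Open Scope ring_scope.

Section Defs.
Variable R : realType.

Definition unitv (N : nat) (i : 'I_N) : 'rV[R]_N := delta_mx 0 i.

Definition pd (N : nat) (i : 'I_N) (f : 'rV[R]_N -> R) : 'rV[R]_N -> R :=
  fun z => 'D_(unitv i) f z.

Fixpoint iter_pd (N : nat) (s : seq 'I_N) (f : 'rV[R]_N -> R) : 'rV[R]_N -> R :=
  match s with
  | [::] => f
  | i :: s' => pd i (iter_pd s' f)
  end.

Definition smooth_on (N : nat) (U : set 'rV[R]_N) (f : 'rV[R]_N -> R) : Prop :=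
  forall (s : seq 'I_N) (x : 'rV[R]_N), U x ->
    {for x, continuous (iter_pd s f)} /\
    (forall i : 'I_N, derivable (iter_pd s f) x (unitv i)).

Definition coordf (N : nat) (i : 'I_N) : 'rV[R]_N -> R := fun z => z 0 i.

Definition vf_apply (N : nat) (X : 'I_N -> 'rV[R]_N -> R) (f : 'rV[R]_N -> R)
  : 'rV[R]_N -> R := fun z => \sum_(a < N) X a z * pd a f z.

(* Hamiltonian vector field X_f = {f, .} of the bivector
   Pi = 1/2 Pi^{ab} d_a /\ d_b (Pi antisymmetric):  X_f^b = sum_a Pi^{ab} d_a f *)
Definition ham (N : nat) (Pi : 'rV[R]_N -> 'M[R]_N) (f : 'rV[R]_N -> R)
  : 'I_N -> 'rV[R]_N -> R :=
  fun b z => \sum_(a < N) pd a f z * Pi z a b.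

(* Divergence w.r.t. the volume form mu = rho dz^1 /\ ... /\ dz^N (rho > 0):
   L_X mu = d(i_X mu) = (sum_a d_a (rho X^a)) dz^1..dz^N, hence
   div_mu X = rho^-1 sum_a d_a (rho X^a). *)
Definition divergence (N : nat) (rho : 'rV[R]_N -> R) (X : 'I_N -> 'rV[R]_N -> R)
  : 'rV[R]_N -> R :=
  fun z => (rho z)^-1 * \sum_(a < N) pd a (fun y => rho y * X a y) z.

(* Modular vector field of (R^N, Pi, rho dz), as the operator f |-> div X_f *)
Definition modular (N : nat) (rho : 'rV[R]_N -> R) (Pi : 'rV[R]_N -> 'M[R]_N)
  (f : 'rV[R]_N -> R) : 'rV[R]_N -> R := divergence rho (ham Pi f).

Definition modular_comp (N : nat) (rho : 'rV[R]_N -> R) (Pi : 'rV[R]_N -> 'M[R]_N)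
  (i : 'I_N) : 'rV[R]_N -> R := modular rho Pi (coordf i).

(* Tangent bundle coordinates z = (x, y) in R^(n+n) *)
Definition xpart (n : nat) (z : 'rV[R]_(n + n)) : 'rV[R]_n := lsubmx z.
Definition ypart (n : nat) (z : 'rV[R]_(n + n)) : 'rV[R]_n := rsubmx z.

(* Complete lift of w = 1/2 w^{ij} d_i /\ d_j :
   w^C = w^{ij} d_{x^i} /\ d_{y^j} + 1/2 y^k d_k w^{ij} d_{y^i} /\ d_{y^j},
   written as the antisymmetric coefficient matrix Pi^{ab} on (x,y). *)
Definition complete_lift (n : nat) (w : 'rV[R]_n -> 'M[R]_n)
  : 'rV[R]_(n + n) -> 'M[R]_(n + n) :=
  fun z => block_mx 0 (w (xpart z)) (- (w (xpart z))^T)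
     (\matrix_(i < n, j < n)
        \sum_(k < n) ypart z 0 k * pd k (fun x => w x i j) (xpart z)).

Definition vertical_lift (n : nat) (X : 'I_n -> 'rV[R]_n -> R)
  : 'I_(n + n) -> 'rV[R]_(n + n) -> R :=
  fun a z => match fintype.split a with
             | inl _ => 0
             | inr i => X i (xpart z)
             end.

Definition poisson_on (n : nat) (U : set 'rV[R]_n) (w : 'rV[R]_n -> 'M[R]_n) : Prop :=
  (forall i j, smooth_on U (fun x => w x i j)) /\
  (forall x, U x -> forall i j, w x i j = - w x j i) /\
  (forall x, U x -> forall i j k,
     \sum_(l < n) (w x i l * pd l (fun y => w y j k) x
                 + w x j l * pd l (fun y => w y k i) x
                 + w x k l * pd l (fun y => w y i j) x) = 0).

Definition riemannian_on (n : nat) (U : set 'rV[R]_n) (g : 'rV[R]_n -> 'M[R]_n) : Prop :=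
  (forall i j, smooth_on U (fun x => g x i j)) /\
  (forall x, U x -> (g x)^T = g x) /\
  (forall x, U x -> forall v : 'rV[R]_n, v != 0 -> 0 < (v *m g x *m v^T) 0 0).

Definition dVg (n : nat) (g : 'rV[R]_n -> 'M[R]_n) : 'rV[R]_n -> R :=
  fun x => Num.sqrt (\det (g x)).
Definition PhiTM (n : nat) (g : 'rV[R]_n -> 'M[R]_n) : 'rV[R]_(n + n) -> R :=
  fun z => \det (g (xpart z)).

End Defs.

From HB Require Import structures.
From mathcomp Require Import all_boot all_order all_algebra.
From mathcomp Require Import all_classical all_reals all_analysis.
From mathcomp Require Import ring.
Import Order.TTheory GRing.Theory Num.Theory.
Import numFieldNormedType.Exports.
Local Open Scope classical_set_scope.
Local Open Scope ring_scope.

(* The divergence of the Hamiltonian vector field X_f^a = Pi^{ba} d_b f with respect to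
   rho dz is a first-order operator in f: in rho^-1 d_a (rho Pi^{ba} d_b f) the
   second-order part Pi^{ba} d_a d_b f cancels by Schwarz's theorem and the antisymmetry
   of Pi.  Hence the modular operator is the vector field with components
   Delta^i = d_a Pi^{ia} + Pi^{ia} d_a ln rho, and it suffices to compare components.
   For w^C and Phi = det g(x), the x-components vanish: w^C has no xx-block, and neither
   its xy-block w(x) nor Phi depends on y.  The y^i-component receives d_j w^{ij} twice,
   from the yx-block -w^T and from the yy-block y^k d_k w^{ij}, which is linear in y, plus
   w^{ij} d_j ln det g = 2 w^{ij} d_j ln sqrt(det g).  Positivity of det g, needed for the
   square root and the logarithm, follows by deforming g to the identity through positive
   definite matrices. *)

Section AffineComposition.
Context {R : realType} {V W : normedModType R}.
Implicit Types (x v : V) (d : W).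

Lemma derive_comp_affine (h : W -> R) (L : V -> W) x v d :
  (forall t : R, L (t *: v + x) = t *: d + L x) ->
  'D_v (fun y => h (L y)) x = 'D_d h (L x).
Proof.
move=> Lv; rewrite /derive; set g1 := fun t => _; set g2 := fun t => _.
by suff -> : g1 = g2 by []; apply/funext => t; rewrite /g1 /g2 /= Lv.
Qed.

Lemma derivable_comp_affine (h : W -> R) (L : V -> W) x v d :
  (forall t : R, L (t *: v + x) = t *: d + L x) ->
  derivable (fun y => h (L y)) x v = derivable h (L x) d.
Proof.
move=> Lv; rewrite /derivable; set g1 := fun t => _; set g2 := fun t => _.
by suff -> : g1 = g2 by []; apply/funext => t; rewrite /g1 /g2 /= Lv.
Qed.

End AffineComposition.

Section DirectionalDerivative.
Context {R : realType} {V : normedModType R}.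
Implicit Types (f g : V -> R) (x u v : V).

Lemma line_affine x v (a t : R) : (t *: 1 + a) *: v + x = t *: v + (a *: v + x).
Proof. by rewrite [t *: 1]mulr1 scalerDl addrA. Qed.

Lemma derive_line f x v (a : R) :
  'D_1 (fun s : R => f (s *: v + x)) a = 'D_v f (a *: v + x).
Proof. exact: derive_comp_affine (line_affine x v a). Qed.

Lemma derivable_line f x v (a : R) :
  derivable (fun s : R => f (s *: v + x)) a 1 = derivable f (a *: v + x) v.
Proof. exact: derivable_comp_affine (line_affine x v a). Qed.

Lemma is_derive_comp_scalar {phi : R -> R} {f x v} :
  derivable f x v -> derivable phi (f x) 1 ->
  is_derive x v (fun y => phi (f y)) ('D_1 phi (f x) * 'D_v f x).
Proof.
move=> df dphi.
have dfl : derivable (fun h : R => f (h *: v + x)) 0 1 by exact: (derivable1P f x v).1.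
have dphil : derivable phi (f (0 *: v + x)) 1 by rewrite scale0r add0r.
apply: DeriveDef.
  apply/(derivable1P (fun y => phi (f y)) x v).2/derivable1_diffP.
  by apply: differentiable_comp; apply/derivable1_diffP.
have := derive_line (fun y => phi (f y)) x v 0; rewrite scale0r add0r => <-.
by have := derive1_comp dfl dphil; rewrite !derive1E /= derive_line scale0r add0r.
Qed.

(* deriveM restated at the realType structure of R, so that it applies to pointwise
   products of real functions without unifying two normed-module instances on R. *)
Lemma derivable_mul f g x v :
  derivable f x v -> derivable g x v -> derivable (fun y => f y * g y) x v.
Proof. exact: derivableM. Qed.

Lemma derive_mul f g x v : derivable f x v -> derivable g x v ->
  'D_v (fun y => f y * g y) x = f x * 'D_v g x + g x * 'D_v f x.
Proof. exact: deriveM. Qed.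

Lemma is_derive_big_sum {I : Type} (r : seq I) (P : pred I) (h : I -> V -> R) x v :
  (forall i, P i -> derivable (h i) x v) ->
  is_derive x v (fun y => \sum_(i <- r | P i) h i y) (\sum_(i <- r | P i) 'D_v (h i) x).
Proof.
move=> dh; rewrite -fct_sumE; elim/big_ind2: _ => [|f df g dg *|i Pi].
- exact: is_derive_cst.
- exact: is_deriveD.
- exact/derivableP/dh.
Qed.

Lemma derivable_big_sum {I : Type} (r : seq I) (P : pred I) (h : I -> V -> R) x v :
  (forall i, P i -> derivable (h i) x v) ->
  derivable (fun y => \sum_(i <- r | P i) h i y) x v.
Proof. by move=> dh; apply: ex_derive; exact: is_derive_big_sum. Qed.

Lemma derive_big_sum {I : Type} (r : seq I) (P : pred I) (h : I -> V -> R) x v :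
  (forall i, P i -> derivable (h i) x v) ->
  'D_v (fun y => \sum_(i <- r | P i) h i y) x = \sum_(i <- r | P i) 'D_v (h i) x.
Proof. by move=> dh; apply: derive_val; exact: is_derive_big_sum. Qed.

Lemma derivable_big_prod {I : Type} (r : seq I) (P : pred I) (h : I -> V -> R) x v :
  (forall i, P i -> derivable (h i) x v) ->
  derivable (fun y => \prod_(i <- r | P i) h i y) x v.
Proof.
move=> dh; rewrite -fct_prodE; elim/big_ind: _ => [|f g df dg|i Pi].
- exact: derivable_cst.
- exact: derivable_mul.
- exact: dh.
Qed.

Lemma derivable_det n (G : V -> 'M[R]_n) x v :
  (forall i j, derivable (fun y => G y i j) x v) -> derivable (fun y => \det (G y)) x v.
Proof.
move=> dG; apply: derivable_big_sum => s _.
by apply: derivable_mul; [exact: derivable_cst | apply: derivable_big_prod => i _].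
Qed.

End DirectionalDerivative.

Section Schwarz.
Context {R : realType} {V : normedModType R}.
Implicit Types (f : V -> R) (z u v : V).

Lemma derive_line_mvt f z u (t : R) :
  0 < t -> (forall a, 0 <= a <= t -> derivable f (a *: u + z) u) ->
  exists2 c, 0 <= c <= t & f (t *: u + z) - f z = 'D_u f (c *: u + z) * t.
Proof.
move=> t0 df; have dl a : a \in `[0, t] -> derivable (fun s : R => f (s *: u + z)) a 1.
  by rewrite in_itv /= derivable_line => /df.
have := @MVT R (fun s : R => f (s *: u + z)) (fun s : R => 'D_u f (s *: u + z)) 0 t t0.
case.
- move=> a ta; apply: DeriveDef; last exact: derive_line.
  exact/dl/subset_itv_oo_cc.
- exact: derivable_within_continuous.
move=> c tc; rewrite scale0r add0r subr0 => ->; exists c => //.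
by have := subset_itv_oo_cc tc; rewrite in_itv.
Qed.

Lemma derive_shift_arg f (w u p : V) : 'D_u (fun q => f (w + q)) p = 'D_u f (w + p).
Proof. by apply: derive_comp_affine => t; rewrite addrCA. Qed.

Lemma derivable_shift_arg f (w u p : V) :
  derivable (fun q => f (w + q)) p u = derivable f (w + p) u.
Proof. by apply: derivable_comp_affine => t; rewrite addrCA. Qed.

Lemma second_difference_mvt f z u v (t : R) (Q : set V) :
  0 < t -> (forall a b, 0 <= a <= t -> 0 <= b <= t -> Q (a *: u + b *: v + z)) ->
  (forall y, Q y -> derivable f y u /\ derivable ('D_u f) y v) ->
  exists a b, [/\ 0 <= a <= t, 0 <= b <= t &
    f (t *: u + t *: v + z) - f (t *: u + z) - (f (t *: v + z) - f z)
    = 'D_v ('D_u f) (a *: u + b *: v + z) * (t * t)].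
Proof.
move=> t0 sqQ dQ; have t0t : (0 : R) <= 0 <= t by rewrite lexx ltW.
have ttt : 0 <= t <= t by rewrite lexx ltW.
have dQu a b ha hb := (dQ _ (sqQ a b ha hb)).1.
pose F p := f (t *: v + p) - f p.
have [c hc Fc] : exists2 c, 0 <= c <= t & F (t *: u + z) - F z = 'D_u F (c *: u + z) * t.
  apply: derive_line_mvt => // a ha; apply: derivableB.
    by rewrite derivable_shift_arg addrCA addrA; exact: dQu.
  by have := dQu a 0 ha t0t; rewrite scale0r addr0.
have dFc : 'D_u F (c *: u + z) = 'D_u f (t *: v + (c *: u + z)) - 'D_u f (c *: u + z).
  rewrite deriveB ?derive_shift_arg //; last by have := dQu c 0 hc t0t; rewrite scale0r addr0.
  by rewrite derivable_shift_arg addrCA addrA; exact: dQu.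
have dDu b : 0 <= b <= t -> derivable ('D_u f) (b *: v + (c *: u + z)) v.
  by move=> hb; rewrite addrCA addrA; exact: (dQ _ (sqQ c b hc hb)).2.
have [b hb Db] := derive_line_mvt _ _ _ _ t0 dDu.
exists c, b; split => //.
have -> : c *: u + b *: v + z = b *: v + (c *: u + z) by rewrite addrCA addrA.
rewrite mulrA -Db -dFc -Fc /F.
by rewrite [t *: v + (t *: u + z)]addrA [t *: v + t *: u]addrC; ring.
Qed.

Lemma ball_square z u v (r : R) : 0 < r ->
  exists2 t, 0 < t & forall a b, 0 <= a <= t -> 0 <= b <= t -> ball z r (a *: u + b *: v + z).
Proof.
move=> r0; have K0 : 0 < `|u| + `|v| + 1 by rewrite ltr_wpDl // addr_ge0.
exists (r / (`|u| + `|v| + 1)); first by rewrite divr_gt0.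
move=> a b /andP[a0 aT] /andP[b0 bT]; rewrite -ball_normE /= opprD addrCA subrr addr0 normrN.
rewrite (le_lt_trans (ler_normD _ _)) // !normrZ !ger0_norm //.
apply: (le_lt_trans (y := r / (`|u| + `|v| + 1) * (`|u| + `|v|))).
  by rewrite mulrDr lerD // ler_wpM2r.
by rewrite mulrAC ltr_pdivrMr // ltr_pM2l // ltrDl.
Qed.

Lemma continuous_eq_of_close (A B : V -> R) z :
  {for z, continuous A} -> {for z, continuous B} ->
  (forall r, 0 < r -> exists p q, [/\ ball z r p, ball z r q & A p = B q]) ->
  A z = B z.
Proof.
move=> cA cB close; have [//|neqAB] := eqVneq (A z) (B z); exfalso.
pose d := `|A z - B z|; have d0 : 0 < d / 2 by rewrite divr_gt0 // normr_gt0 subr_eq0.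
have /nbhs_ballP[r r0 near_z] : \forall y \near z, `|A z - A y| < d / 2 /\ `|B z - B y| < d / 2.
  near=> y; split; near: y.
  - exact: (cvgrPdist_lt _ _).1 cA _ d0.
  - exact: (cvgrPdist_lt _ _).1 cB _ d0.
have [p [q [zp zq ABpq]]] := close r r0.
have [[nA _] [_ nB]] := (near_z p zp, near_z q zq).
have tri : d <= `|A z - A p| + `|B z - B q|.
  by rewrite /d (_ : A z - B z = (A z - A p) - (B z - B q)) ?ler_normB // ABpq; ring.
by have := le_lt_trans tri (ltrD nA nB); rewrite -splitr ltxx.
Unshelve. all: by end_near.
Qed.

(* Both mixed partials equal the same second difference quotient at points of an
   arbitrarily small square around z. *)
Lemma derive_comm f z u v :
  (\forall y \near z, [/\ derivable f y u, derivable f y v,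
                        derivable ('D_u f) y v & derivable ('D_v f) y u]) ->
  {for z, continuous ('D_v ('D_u f))} -> {for z, continuous ('D_u ('D_v f))} ->
  'D_v ('D_u f) z = 'D_u ('D_v f) z.
Proof.
move=> /nbhs_ballP[s s0 dnear] cA cB; apply: (continuous_eq_of_close _ _ _ cA cB) => r r0.
set rs := Num.min r s; have rs0 : 0 < rs by rewrite lt_min r0 s0.
have in_r y : ball z rs y -> ball z r y by apply: le_ball; rewrite ge_min lexx.
have in_s y : ball z rs y -> ball z s y by apply: le_ball; rewrite ge_min lexx orbT.
have [t t0 sq] := ball_square z u v _ rs0.
have sq' a b : 0 <= a <= t -> 0 <= b <= t -> ball z rs (a *: v + b *: u + z).
  by move=> ha hb; rewrite [_ + b *: u]addrC; exact: sq hb ha.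
have duv y : ball z rs y -> derivable f y u /\ derivable ('D_u f) y v by move=> /in_s/dnear[].
have dvu y : ball z rs y -> derivable f y v /\ derivable ('D_v f) y u by move=> /in_s/dnear[].
have [a1 [b1 [ha1 hb1 E1]]] := second_difference_mvt _ _ _ _ _ _ t0 sq duv.
have [a2 [b2 [ha2 hb2 E2]]] := second_difference_mvt _ _ _ _ _ _ t0 sq' dvu.
exists (a1 *: u + b1 *: v + z), (a2 *: v + b2 *: u + z).
split; [exact/in_r/sq | exact/in_r/sq' |].
have swap_uv : f (t *: u + t *: v + z) - f (t *: u + z) - (f (t *: v + z) - f z)
    = f (t *: v + t *: u + z) - f (t *: v + z) - (f (t *: u + z) - f z).
  by rewrite [t *: v + t *: u]addrC; ring.
have tt0 : t * t != 0 by rewrite mulf_neq0 // lt0r_neq0.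
exact: mulIf tt0 _ _ (etrans (esym E1) (etrans swap_uv E2)).
Qed.

End Schwarz.

Section PositiveDefinite.
Context {R : realType} {n : nat}.

Definition posdef (A : 'M[R]_n) := forall v : 'rV_n, v != 0 -> 0 < (v *m A *m v^T) 0 0.

Lemma posdef_det_neq0 (A : 'M[R]_n) : posdef A -> \det A != 0.
Proof. by move=> hA; apply/negP => /det0P[v /hA + vA]; rewrite vA mul0mx mxE ltxx. Qed.

Lemma posdef_id : posdef 1%:M.
Proof.
have sq_ge0 (v : 'rV[R]_n) j : 0 <= v 0 j * v^T j 0 by rewrite mxE -expr2 sqr_ge0.
move=> v vn0; rewrite mulmx1 mxE lt_def sumr_ge0 ?andbT => [|j _]; last exact: sq_ge0.
apply: contra vn0 => /eqP /psumr_eq0P v0; apply/eqP/matrixP => i j; rewrite ord1 mxE.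
by have /eqP := v0 (fun j _ => sq_ge0 v j) j isT; rewrite mxE -expr2 sqrf_eq0 => /eqP.
Qed.

Lemma posdefD (A B : 'M[R]_n) : posdef A -> posdef B -> posdef (A + B).
Proof. by move=> hA hB v vn0; rewrite mulmxDr mulmxDl mxE addr_gt0 ?hA ?hB. Qed.

Lemma posdefZ (t : R) (A : 'M[R]_n) : 0 < t -> posdef A -> posdef (t *: A).
Proof. by move=> t0 hA v vn0; rewrite -scalemxAr -scalemxAl mxE mulr_gt0 ?hA. Qed.

Lemma posdef_det_gt0 (A : 'M[R]_n) : posdef A -> 0 < \det A.
Proof.
move=> hA; pose psi t := \det (t *: A + (1 - t) *: 1%:M).
have psi_neq0 t : 0 <= t <= 1 -> psi t != 0.
  case/andP; rewrite le0r le_eqVlt => /orP[/eqP-> _|t_gt0 /orP[/eqP->|t_lt1]].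
  - by rewrite /psi scale0r add0r subr0 scale1r det1 oner_neq0.
  - by rewrite /psi subrr scale0r addr0 scale1r posdef_det_neq0.
  apply/posdef_det_neq0/posdefD; apply: posdefZ => //; last exact: posdef_id.
  by rewrite subr_gt0.
have psi_cont : {within `[0, 1], continuous psi}.
  apply: derivable_within_continuous => t _; apply: derivable_det => i j.
  under eq_fun do rewrite !mxE.
  apply: derivableD; apply: derivable_mul;
    [exact: derivable_id | exact: derivable_cst | | exact: derivable_cst].
  by apply: derivableB; [exact: derivable_cst | exact: derivable_id].
have psi0 : psi 0 = 1 by rewrite /psi scale0r add0r subr0 scale1r det1.
have psi1 : psi 1 = \det A by rewrite /psi scale1r subrr scale0r addr0.
rewrite -psi1 lt_def psi_neq0 ?lexx ?ler01 //= leNgt; apply/negP => psi1_lt0.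
have [|c c01 /eqP] := @IVT R psi 0 1 0 ler01 psi_cont.
  by rewrite psi0 ge_min le_max (ltW psi1_lt0) ler01 orbT.
by apply/negP/psi_neq0; rewrite !(itvP c01).
Qed.

End PositiveDefinite.

Lemma sum_antisym_sym_eq0 (K : numDomainType) N (P S : 'I_N -> 'I_N -> K) :
  (forall a b, P a b = - P b a) -> (forall a b, S a b = S b a) ->
  \sum_a \sum_b P b a * S a b = 0.
Proof.
move=> P_anti S_sym; set s := (X in X = 0); apply/eqP.
have : s = - s.
  rewrite {1}/s exchange_big -sumrN; apply: eq_bigr => b _.
  by rewrite -sumrN; apply: eq_bigr => a _; rewrite P_anti S_sym mulNr.
by move/eqP; rewrite -addr_eq0 -mulr2n -mulr_natr mulf_eq0 pnatr_eq0 orbF.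
Qed.

Section ModularVectorField.
Context {R : realType} {N : nat}.
Implicit Types (F rho : 'rV[R]_N -> R) (Pi : 'rV[R]_N -> 'M[R]_N) (z : 'rV[R]_N).

Lemma unitvE (a k : 'I_N) : unitv R a 0 k = (a == k)%:R.
Proof. by rewrite /unitv mxE eqxx eq_sym. Qed.

Lemma coord_affine (k : 'I_N) (t : R) (v z : 'rV[R]_N) : (t *: v + z) 0 k = t *: v 0 k + z 0 k.
Proof. by rewrite !mxE. Qed.

Lemma derivable_coord (k : 'I_N) z (v : 'rV[R]_N) : derivable (fun y : 'rV[R]_N => y 0 k) z v.
Proof.
by rewrite (derivable_comp_affine id _ _ _ _ (fun t => coord_affine k t v z)); exact: derivable_id.
Qed.

Lemma derive_coord (k : 'I_N) z (v : 'rV[R]_N) : 'D_v (fun y : 'rV[R]_N => y 0 k) z = v 0 k.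
Proof. by rewrite (derive_comp_affine id _ _ _ _ (fun t => coord_affine k t v z)) derive_id. Qed.

Lemma pd_coordf (a i : 'I_N) : pd a (@coordf R N i) = fun=> (a == i)%:R.
Proof. by apply/funext => z; rewrite /pd /coordf derive_coord unitvE. Qed.

Lemma smooth_pd_comm (S : set 'rV[R]_N) F z (a b : 'I_N) :
  nbhs z S -> smooth_on S F -> pd a (pd b F) z = pd b (pd a F) z.
Proof.
move=> Sz F_smooth; have Sz' := nbhs_singleton Sz.
apply: derive_comm; last 2 first.
- exact: (F_smooth [:: a; b] z Sz').1.
- exact: (F_smooth [:: b; a] z Sz').1.
apply: filterS Sz => y Sy; split; [exact: (F_smooth [::] y Sy).2 | exact: (F_smooth [::] y Sy).2 |
  exact: (F_smooth [:: b] y Sy).2 | exact: (F_smooth [:: a] y Sy).2].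
Qed.

Lemma modular_expand rho Pi F z :
  rho z != 0 ->
  (forall a, derivable rho z (unitv R a)) ->
  (forall a b, derivable (fun y => Pi y b a) z (unitv R a)) ->
  (forall a b, derivable (pd b F) z (unitv R a)) ->
  modular rho Pi F z
  = \sum_b pd b F z * \sum_a (pd a (fun y => Pi y b a) z + (rho z)^-1 * pd a rho z * Pi z b a)
    + \sum_a \sum_b Pi z b a * pd a (pd b F) z.
Proof.
move=> rho0 drho dPi dF; rewrite /modular /divergence /ham.
have dterm a b : derivable (fun y => pd b F y * Pi y b a) z (unitv R a).
  exact: derivable_mul.
have pd_rho_ham a : pd a (fun y => rho y * \sum_b pd b F y * Pi y b a) z
    = rho z * \sum_b (pd b F z * pd a (fun y => Pi y b a) z + Pi z b a * pd a (pd b F) z)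
      + (\sum_b pd b F z * Pi z b a) * pd a rho z.
  have dsum : derivable (fun y => \sum_b pd b F y * Pi y b a) z (unitv R a).
    exact: derivable_big_sum.
  rewrite /pd derive_mul // derive_big_sum => [|b _]; last exact: dterm.
  by congr (_ * _ + _); apply: eq_bigr => b _; apply: derive_mul; [exact: dF | exact: dPi].
rewrite (eq_bigr _ (fun a _ => pd_rho_ham a)) mulr_sumr.
transitivity (\sum_a (\sum_b pd b F z * (pd a (fun y => Pi y b a) z
                                      + (rho z)^-1 * pd a rho z * Pi z b a)
                    + \sum_b Pi z b a * pd a (pd b F) z)).
  apply: eq_bigr => a _; rewrite mulrDr mulKf // mulr_suml mulr_sumr -!big_split /=.
  by apply: eq_bigr => b _; ring.
rewrite big_split /= exchange_big; congr (_ + _).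
by apply: eq_bigr => b _; rewrite mulr_sumr.
Qed.

Section ModularHyps.
Variables (rho : 'rV[R]_N -> R) (Pi : 'rV[R]_N -> 'M[R]_N) (z : 'rV[R]_N).
Hypotheses (rho_neq0 : rho z != 0) (rho_derivable : forall a, derivable rho z (unitv R a))
  (Pi_derivable : forall a b, derivable (fun y => Pi y b a) z (unitv R a)).

Lemma modular_compE (i : 'I_N) :
  modular_comp rho Pi i z
  = \sum_a (pd a (fun y => Pi y i a) z + (rho z)^-1 * pd a rho z * Pi z i a).
Proof.
rewrite /modular_comp modular_expand // => [|a b]; last first.
  by rewrite pd_coordf; exact: derivable_cst.
rewrite (bigD1 i) //= pd_coordf eqxx mul1r.
rewrite [X in _ + X + _]big1 => [|b bi]; last by rewrite pd_coordf (negbTE bi) mul0r.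
rewrite [X in _ + X]big1 => [|a _]; last first.
  by rewrite big1 // => b _; rewrite !pd_coordf /pd derive_cst mulr0.
by rewrite !addr0.
Qed.

Lemma modular_vf_apply F :
  (forall a b, Pi z a b = - Pi z b a) ->
  (forall a b, derivable (pd b F) z (unitv R a)) ->
  (forall a b, pd a (pd b F) z = pd b (pd a F) z) ->
  modular rho Pi F z = vf_apply (modular_comp rho Pi) F z.
Proof.
move=> Pi_anti dF F_sym; rewrite modular_expand // sum_antisym_sym_eq0 // addr0.
by apply: eq_bigr => b _; rewrite modular_compE mulrC.
Qed.

End ModularHyps.

End ModularVectorField.

Section TangentBundle.
Context {R : realType} {n : nat}.
Implicit Types (z : 'rV[R]_(n + n)) (h : 'rV[R]_n -> R) (w : 'rV[R]_n -> 'M[R]_n).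

Lemma xpart_affine (t : R) (v z : 'rV[R]_(n + n)) : xpart (t *: v + z) = t *: xpart v + xpart z.
Proof. by apply/matrixP => i k; rewrite !mxE. Qed.

Lemma xpart_unitv_x (j : 'I_n) : xpart (unitv R (lshift n j)) = unitv R j.
Proof. by apply/matrixP => i k; rewrite !mxE eq_lshift. Qed.

Lemma xpart_unitv_y (j : 'I_n) : xpart (unitv R (rshift n j)) = 0.
Proof. by apply/matrixP => i k; rewrite !mxE eq_sym eq_lrshift andbF. Qed.

Lemma derive_xpart h z (a : 'I_(n + n)) :
  'D_(unitv R a) (fun y => h (xpart y)) z = 'D_(xpart (unitv R a)) h (xpart z).
Proof. exact: derive_comp_affine (fun t => xpart_affine t _ z). Qed.

Lemma derivable_xpart h z (a : 'I_(n + n)) :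
  derivable (fun y => h (xpart y)) z (unitv R a) = derivable h (xpart z) (xpart (unitv R a)).
Proof. exact: derivable_comp_affine (fun t => xpart_affine t _ z). Qed.

Lemma derive_xpart_x h z (j : 'I_n) :
  'D_(unitv R (lshift n j)) (fun y => h (xpart y)) z = 'D_(unitv R j) h (xpart z).
Proof. by rewrite derive_xpart xpart_unitv_x. Qed.

Lemma derive_xpart_y h z (j : 'I_n) : 'D_(unitv R (rshift n j)) (fun y => h (xpart y)) z = 0.
Proof. by rewrite derive_xpart xpart_unitv_y derive0. Qed.

Lemma derivable_xpart_x h z (j : 'I_n) :
  derivable h (xpart z) (unitv R j) -> derivable (fun y => h (xpart y)) z (unitv R (lshift n j)).
Proof. by rewrite derivable_xpart xpart_unitv_x. Qed.

Lemma derivable_xpart_y h z (j : 'I_n) : derivable (fun y => h (xpart y)) z (unitv R (rshift n j)).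
Proof. by rewrite derivable_xpart xpart_unitv_y; exact: derivable0. Qed.

Lemma ypartE z (k : 'I_n) : ypart z 0 k = z 0 (rshift n k).
Proof. by rewrite /ypart mxE. Qed.

Lemma derive_ypart z (a : 'I_(n + n)) (k : 'I_n) :
  'D_(unitv R a) (fun y => ypart y 0 k) z = (a == rshift n k)%:R.
Proof. by rewrite (funext (fun y => ypartE y k)) derive_coord unitvE. Qed.

Lemma derivable_ypart z (v : 'rV[R]_(n + n)) (k : 'I_n) : derivable (fun y => ypart y 0 k) z v.
Proof. by rewrite (funext (fun y => ypartE y k)); exact: derivable_coord. Qed.

Lemma complete_lift_xx w z (i j : 'I_n) : complete_lift w z (lshift n i) (lshift n j) = 0.
Proof. by rewrite /complete_lift block_mxEul mxE. Qed.

Lemma complete_lift_xy w z (i j : 'I_n) :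
  complete_lift w z (lshift n i) (rshift n j) = w (xpart z) i j.
Proof. by rewrite /complete_lift block_mxEur. Qed.

Lemma complete_lift_yx w z (i j : 'I_n) :
  complete_lift w z (rshift n i) (lshift n j) = - w (xpart z) j i.
Proof. by rewrite /complete_lift block_mxEdl !mxE. Qed.

Lemma complete_lift_yy w z (i j : 'I_n) : complete_lift w z (rshift n i) (rshift n j)
  = \sum_(k < n) ypart z 0 k * pd k (fun x => w x i j) (xpart z).
Proof. by rewrite /complete_lift block_mxEdr mxE. Qed.

Lemma vertical_lift_x (X : 'I_n -> 'rV[R]_n -> R) z (i : 'I_n) : vertical_lift X (lshift n i) z = 0.
Proof. by rewrite /vertical_lift -[lshift n i]/(unsplit (inl i)) unsplitK. Qed.

Lemma vertical_lift_y (X : 'I_n -> 'rV[R]_n -> R) z (i : 'I_n) :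
  vertical_lift X (rshift n i) z = X i (xpart z).
Proof. by rewrite /vertical_lift -[rshift n i]/(unsplit (inr i)) unsplitK. Qed.

Lemma pd_y_complete_lift_yy w z (i j : 'I_n) :
  pd (rshift n j) (fun y => complete_lift w y (rshift n i) (rshift n j)) z
  = pd j (fun x => w x i j) (xpart z).
Proof.
pose c k x := pd k (fun x => w x i j) x.
have dterm k : derivable (fun y => ypart y 0 k * c k (xpart y)) z (unitv R (rshift n j)).
  by apply: derivable_mul; [exact: derivable_ypart | exact: (derivable_xpart_y (c k))].
rewrite (funext (fun y => complete_lift_yy w y i j)) /pd derive_big_sum => [|k _];
  last exact: dterm.
have term k : 'D_(unitv R (rshift n j)) (fun y => ypart y 0 k * c k (xpart y)) z
    = (j == k)%:R * c k (xpart z).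
  rewrite derive_mul; [|exact: derivable_ypart | exact: (derivable_xpart_y (c k))].
  by rewrite (derive_xpart_y (c k)) derive_ypart eq_rshift mulr0 add0r mulrC.
rewrite (bigD1 j) //= big1 => [|k kj]; rewrite term ?eqxx ?mul1r ?addr0 //.
by rewrite eq_sym (negbTE kj) mul0r.
Qed.

End TangentBundle.

Section PoissonRiemannian.
Context {R : realType} {n : nat}.
Variables (U : set 'rV[R]_n) (w g : 'rV[R]_n -> 'M[R]_n).
Hypotheses (U_open : open U)
  (w_smooth : forall i j, smooth_on U (fun x => w x i j))
  (w_antisym : forall x, U x -> forall i j, w x i j = - w x j i)
  (g_smooth : forall i j, smooth_on U (fun x => g x i j))
  (g_posdef : forall x, U x -> posdef (g x)).

Lemma w_derivable x (i j k : 'I_n) : U x -> derivable (fun y => w y i j) x (unitv R k).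
Proof. by move=> Ux; exact: (w_smooth i j [::] x Ux).2. Qed.

Lemma pd_w_antisym x (i j k : 'I_n) :
  U x -> pd k (fun y => w y i j) x = - pd k (fun y => w y j i) x.
Proof.
move=> Ux; have U_near : \forall y \near x, U y by exact: open_nbhs_nbhs.
rewrite /pd (near_eq_derive _ (g := fun y => - w y j i)); last first.
  by near=> y; apply: w_antisym; near: y.
by rewrite deriveN //; exact: w_derivable.
Unshelve. all: by end_near.
Qed.

Lemma det_g_gt0 x : U x -> 0 < \det (g x).
Proof. by move=> Ux; exact/posdef_det_gt0/g_posdef. Qed.

Lemma det_g_derivable x (k : 'I_n) : U x -> derivable (fun y => \det (g y)) x (unitv R k).
Proof. by move=> Ux; apply: derivable_det => i j; exact: (g_smooth i j [::] x Ux).2. Qed.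

Lemma dVg_gt0 x : U x -> 0 < dVg g x.
Proof. by move=> Ux; rewrite sqrtr_gt0 det_g_gt0. Qed.

Lemma is_derive_dVg x (k : 'I_n) : U x ->
  is_derive x (unitv R k) (dVg g) ((2 * dVg g x)^-1 * pd k (fun y => \det (g y)) x).
Proof.
move=> Ux; rewrite -derive_sqrt ?det_g_gt0 //; apply: is_derive_comp_scalar.
  exact: det_g_derivable.
by case: (is_derive1_sqrt (det_g_gt0 _ Ux)).
Qed.

Lemma logderiv_dVg x (k : 'I_n) : U x ->
  2 * ((dVg g x)^-1 * pd k (dVg g) x) = (\det (g x))^-1 * pd k (fun y => \det (g y)) x.
Proof.
move=> Ux; case: (is_derive_dVg _ k Ux) => _; rewrite /pd => ->.
have s0 := dVg_gt0 _ Ux; have d0 := det_g_gt0 _ Ux.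
rewrite -[\det (g x)](sqr_sqrtr (ltW d0)) -/(dVg g x).
by field; rewrite gt_eqF.
Qed.

Lemma logderiv_dVg_ln x (k : 'I_n) : U x ->
  (dVg g x)^-1 * pd k (dVg g) x = pd k (fun y => ln (dVg g y)) x.
Proof.
move=> Ux; have [ddVg _] := is_derive_dVg _ k Ux.
case: (is_derive1_ln (dVg_gt0 _ Ux)) => dln Dln.
by case: (is_derive_comp_scalar ddVg dln) => _; rewrite /pd => ->; rewrite Dln.
Qed.

Lemma modular_comp_dVgE x (i : 'I_n) : U x ->
  modular_comp (dVg g) w i x
  = \sum_a (pd a (fun y => w y i a) x + (dVg g x)^-1 * pd a (dVg g) x * w x i a).
Proof.
move=> Ux; apply: modular_compE => [|a|a b]; last exact: w_derivable.
- by rewrite gt_eqF // dVg_gt0.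
- by case: (is_derive_dVg _ a Ux).
Qed.

Lemma xpart_nbhs z : U (xpart z) -> nbhs z [set y : 'rV[R]_(n + n) | U (xpart y)].
Proof. by move=> Uz; apply: continuous_lsubmx; exact: open_nbhs_nbhs. Qed.

Lemma complete_lift_antisym z a b :
  U (xpart z) -> complete_lift w z a b = - complete_lift w z b a.
Proof.
move=> Uz; case: (split_ordP a) => i ->; case: (split_ordP b) => j ->.
- by rewrite !complete_lift_xx oppr0.
- by rewrite complete_lift_xy complete_lift_yx opprK.
- by rewrite complete_lift_yx complete_lift_xy.
rewrite !complete_lift_yy -sumrN; apply: eq_bigr => k _.
by rewrite (pd_w_antisym _ i j k Uz) mulrN.
Qed.

Lemma complete_lift_derivable z a b :
  U (xpart z) -> derivable (fun y => complete_lift w y b a) z (unitv R a).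
Proof.
move=> Uz; case: (split_ordP a) => j ->; case: (split_ordP b) => i ->.
- by rewrite (funext (fun y => complete_lift_xx w y i j)); exact: derivable_cst.
- rewrite (funext (fun y => complete_lift_yx w y i j)); apply: derivableN.
  by apply: (derivable_xpart_x (fun x => w x j i)); exact: w_derivable.
- rewrite (funext (fun y => complete_lift_xy w y i j)).
  exact: (derivable_xpart_y (fun x => w x i j)).
rewrite (funext (fun y => complete_lift_yy w y i j)).
apply: derivable_big_sum => k _; apply: derivable_mul; first exact: derivable_ypart.
exact: (derivable_xpart_y (pd k (fun x => w x i j))).
Qed.

Lemma PhiTM_derivable z a : U (xpart z) -> derivable (PhiTM g) z (unitv R a).
Proof.
move=> Uz; case: (split_ordP a) => j ->; last exact: (derivable_xpart_y (fun x => \det (g x))).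
by apply: (derivable_xpart_x (fun x => \det (g x))); exact: det_g_derivable.
Qed.

Lemma modular_comp_complete_lift_x z (i : 'I_n) :
  U (xpart z) -> modular_comp (PhiTM g) (complete_lift w) (lshift n i) z = 0.
Proof.
move=> Uz; rewrite modular_compE; first last.
- by move=> a b; exact: complete_lift_derivable.
- by move=> a; exact: PhiTM_derivable.
- by rewrite gt_eqF // det_g_gt0.
rewrite big_split_ord /= !big1 ?addr0 // => j _.
- rewrite (funext (fun y => complete_lift_xy w y i j)) /pd (derive_xpart_y (fun x => w x i j)).
  by rewrite (derive_xpart_y (fun x => \det (g x))) mulr0 mul0r addr0.
- rewrite (funext (fun y => complete_lift_xx w y i j)) complete_lift_xx.
  by rewrite mulr0 addr0 /pd derive_cst.
Qed.

Lemma modular_comp_complete_lift_y z (i : 'I_n) : U (xpart z) ->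
  modular_comp (PhiTM g) (complete_lift w) (rshift n i) z = 2 * modular_comp (dVg g) w i (xpart z).
Proof.
move=> Uz; rewrite modular_compE; first last.
- by move=> a b; exact: complete_lift_derivable.
- by move=> a; exact: PhiTM_derivable.
- by rewrite gt_eqF // det_g_gt0.
rewrite modular_comp_dVgE // mulr_sumr big_split_ord /= -big_split /=; apply: eq_bigr => j _.
have dx : pd (lshift n j) (fun y => complete_lift w y (rshift n i) (lshift n j)) z
    = pd j (fun x => w x i j) (xpart z).
  rewrite (funext (fun y => complete_lift_yx w y i j)) /pd deriveN; last first.
    by apply: (derivable_xpart_x (fun x => w x j i)); exact: w_derivable.
  rewrite (derive_xpart_x (fun x => w x j i)).
  by have := pd_w_antisym _ i j j Uz; rewrite /pd => ->.
have dPhi_x : pd (lshift n j) (PhiTM g) z = pd j (fun x => \det (g x)) (xpart z).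
  exact: (derive_xpart_x (fun x => \det (g x))).
have dPhi_y : pd (rshift n j) (PhiTM g) z = 0 by exact: (derive_xpart_y (fun x => \det (g x))).
rewrite dx dPhi_x dPhi_y pd_y_complete_lift_yy complete_lift_yx (w_antisym _ Uz j i) /PhiTM.
by rewrite mulrDr mulrA logderiv_dVg // opprK mulr0 mul0r addr0; ring.
Qed.

Lemma modular_comp_complete_lift z a : U (xpart z) ->
  modular_comp (PhiTM g) (complete_lift w) a z = 2 * vertical_lift (modular_comp (dVg g) w) a z.
Proof.
move=> Uz; case: (split_ordP a) => i ->.
  by rewrite vertical_lift_x mulr0; exact: modular_comp_complete_lift_x.
by rewrite vertical_lift_y; exact: modular_comp_complete_lift_y.
Qed.

Lemma modular_complete_lift F z :
  smooth_on [set y | U (xpart y)] F -> U (xpart z) ->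
  modular (PhiTM g) (complete_lift w) F z
  = 2 * vf_apply (vertical_lift (modular_comp (dVg g) w)) F z.
Proof.
move=> F_smooth Uz; rewrite modular_vf_apply.
- rewrite /vf_apply mulr_sumr; apply: eq_bigr => a _.
  by rewrite modular_comp_complete_lift // mulrA.
- by rewrite gt_eqF // det_g_gt0.
- by move=> a; exact: PhiTM_derivable.
- by move=> a b; exact: complete_lift_derivable.
- by move=> a b; exact: complete_lift_antisym.
- by move=> a b; exact: (F_smooth [:: b] z Uz).2.
- by move=> a b; apply: smooth_pd_comm F_smooth; exact: xpart_nbhs.
Qed.

Lemma modular_comp_dVg_ln x (i : 'I_n) : U x ->
  modular_comp (dVg g) w i x
  = \sum_(k < n) (pd k (fun y => w y i k) x + w x i k * pd k (fun y => ln (dVg g y)) x).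
Proof.
by move=> Ux; rewrite modular_comp_dVgE //; apply: eq_bigr => k _; rewrite mulrC logderiv_dVg_ln.
Qed.

End PoissonRiemannian.

Theorem proposition1p7 (R : realType) (n : nat) (U : set 'rV[R]_n)
  (w g : 'rV[R]_n -> 'M[R]_n) :
  open U -> poisson_on U w -> riemannian_on U g ->
  (* Delta^TM_Phi = 2 (Delta^M_{dV_g})^V, as derivations on smooth functions on TU *)
  (forall F : 'rV[R]_(n + n) -> R,
     smooth_on [set z | U (xpart z)] F ->
     forall z, U (xpart z) ->
       modular (PhiTM g) (complete_lift w) F z
       = 2 * vf_apply (vertical_lift (modular_comp (dVg g) w)) F z) /\
  (* coordinate expression of Delta^M_{dV_g} *)
  (forall (i : 'I_n) x, U x ->
     modular_comp (dVg g) w i x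
     = \sum_(k < n) (pd k (fun y => w y i k) x
                     + w x i k * pd k (fun y => ln (dVg g y)) x)).
Proof.
move=> U_open [w_smooth [w_antisym _]] [g_smooth [_ g_posdef]]; split.
- by move=> F F_smooth z Uz; apply: (modular_complete_lift U).
- by move=> i x Ux; apply: (modular_comp_dVg_ln U).
Qed.
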